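(* In $G=GL(\infty,F_2)\ltimes F_2^\infty$, for every nonzero $v\in F_2^\infty$ one has $\mathrm{fpc}(v)=\{e,v\}$.
   Context: For a group $G$ and $g\in G$, $C_G(g)$ is the centralizer of $g$ and $\mathrm{fpc}(g)=\{h\in G:\ \{t^{-1}ht: t\in C_G(g)\}\text{ is finite}\}$. $F_2$ is the field with two elements and $F_2^\infty=\bigoplus_{\mathbb N}F_2$ is the space of finitely supported column vectors, regarded as an abelian group under addition. $GL(\infty,F_2)$ is the group of invertible $\mathbb N\times\mathbb N$ matrices $M$ over $F_2$ with $M_{ij}\neq\delta_{ij}$ for only finitely many $(i,j)$, acting on $F_2^\infty$ by matrix multiplication. $G=GL(\infty,F_2)\ltimes F_2^\infty$ is the semidirect product with $gvg^{-1}=g(v)$. *)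

(* F_2 is modelled by bool (addition = xorb, multiplication = andb). *)
From Stdlib Require Import Arith List ClassicalEpsilon.

Definition vec := nat -> bool.
Definition mat := nat -> nat -> bool.

(* finitely supported vectors: F_2^infinity = (+)_N F_2 *)
Definition fsupp (v : vec) : Prop :=
  exists N, forall i, N <= i -> v i = false.

Definition fdev (M : mat) : Prop :=
  exists N, forall i j, (N <= i \/ N <= j) -> M i j = Nat.eqb i j.

Fixpoint xsum_upto (f : nat -> bool) (n : nat) : bool :=
  match n with
  | 0 => false
  | S n' => xorb (xsum_upto f n') (f n')
  end.

(* Sum over F_2 of a finitely supported family f : nat -> bool
   (the value is irrelevant if f is not finitely supported). *)
Definition xsum (f : nat -> bool) : bool :=
  xsum_upto f (epsilon (inhabits 0) (fun N => forall j, N <= j -> f j = false)).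

Definition idm : mat := fun i j => Nat.eqb i j.
Definition mmul (M N : mat) : mat := fun i k => xsum (fun j => andb (M i j) (N j k)).
Definition mact (M : mat) (v : vec) : vec := fun i => xsum (fun j => andb (M i j) (v j)).
Definition vadd (v w : vec) : vec := fun i => xorb (v i) (w i).
Definition vzero : vec := fun _ => false.

Definition inGL (M : mat) : Prop :=
  fdev M /\ exists N, fdev N /\ mmul M N = idm /\ mmul N M = idm.

Definition minv (M : mat) : mat :=
  epsilon (inhabits idm) (fun N => fdev N /\ mmul M N = idm /\ mmul N M = idm).

(* Elements of G = GL(infinity,F_2) |x F_2^infinity: the pair (v, g) stands
   for the product v * g (v in the normal subgroup F_2^infinity), so that
   g v g^-1 = g(v). *)
Definition Gt := (vec * mat)%type.

Definition inG (x : Gt) : Prop := fsupp (fst x) /\ inGL (snd x).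

Definition gmul (x y : Gt) : Gt :=
  (vadd (fst x) (mact (snd x) (fst y)), mmul (snd x) (snd y)).

(* inverse of v*g is g^-1 * (-v) = (-(g^-1 v)) * g^-1 ; in char 2, -w = w *)
Definition ginv (x : Gt) : Gt :=
  (mact (minv (snd x)) (fst x), minv (snd x)).

Definition gone : Gt := (vzero, idm).

Definition ofvec (v : vec) : Gt := (v, idm).

Definition centralizer (g : Gt) (t : Gt) : Prop := inG t /\ gmul t g = gmul g t.

Definition fpc (g : Gt) (h : Gt) : Prop :=
  inG h /\
  exists s : list Gt, forall t, centralizer g t -> In (gmul (ginv t) (gmul h t)) s.

From Stdlib Require Import Arith List ClassicalEpsilon Lia Bool FunctionalExtensionality Classical.

(* Sufficiency: an element commuting with the whole centralizer C_G(v) is its own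
   only C_G(v)-conjugate, and both e and v do so.

   Necessity: let h = (u, a).  Transvections T = I + x y^T with y.x = 0 are
   involutions of GL(infinity, F_2), and they centralize v as soon as y.v = 0.
   If a <> I, say a_pj <> delta_pj, the transvections I + e_j e_k^T (k large)
   conjugate h to elements whose (p, k) entries single out k.  If a = I and
   u is neither 0 nor v, choose y with y.v = 0 and y.u = 1; the transvections
   I + e_k y^T (k large) conjugate u to u + e_k.  Either way h has infinitely
   many conjugates under C_G(v). *)

Lemma xsum_upto_zero f n : (forall j, j < n -> f j = false) -> xsum_upto f n = false.
Proof.
  induction n as [|n IH]; simpl; intros H; auto.
  rewrite IH, H by (auto || (intros; apply H; lia)); auto.
Qed.

Lemma xsum_upto_stable f N : (forall j, N <= j -> f j = false) ->
  forall m, N <= m -> xsum_upto f m = xsum_upto f N.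
Proof.
  intros H m; induction m as [|m IH]; intros Hm.
  - replace N with 0 by lia; reflexivity.
  - destruct (Nat.eq_dec N (S m)) as [->|]; auto.
    simpl; rewrite IH, H by lia; apply xorb_false_r.
Qed.

Lemma xsum_upto_spec f N : (forall j, N <= j -> f j = false) -> xsum f = xsum_upto f N.
Proof.
  intros H; unfold xsum.
  set (P := fun N => forall j, N <= j -> f j = false).
  assert (HP : P (epsilon (inhabits 0) P)) by (apply epsilon_spec; exists N; exact H).
  set (N0 := epsilon (inhabits 0) P) in *.
  rewrite <- (xsum_upto_stable f N0 HP (max N N0)), <- (xsum_upto_stable f N H (max N N0))
    by lia.
  reflexivity.
Qed.

Lemma xsum_upto_xor f g n :
  xsum_upto (fun j => xorb (f j) (g j)) n = xorb (xsum_upto f n) (xsum_upto g n).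
Proof.
  induction n as [|n IH]; simpl; auto.
  rewrite IH; destruct (xsum_upto f n), (xsum_upto g n), (f n), (g n); auto.
Qed.

Lemma xsum_xor f g : fsupp f -> fsupp g ->
  xsum (fun j => xorb (f j) (g j)) = xorb (xsum f) (xsum g).
Proof.
  intros [N1 H1] [N2 H2].
  rewrite (xsum_upto_spec f (max N1 N2)), (xsum_upto_spec g (max N1 N2))
    by (intros; (apply H1 || apply H2); lia).
  rewrite (xsum_upto_spec _ (max N1 N2)); [apply xsum_upto_xor|].
  intros j Hj; rewrite H1, H2 by lia; auto.
Qed.

Lemma xsum_zero : xsum (fun _ => false) = false.
Proof. rewrite (xsum_upto_spec _ 0); auto. Qed.

Lemma xsum_andl b f : xsum (fun j => b && f j) = b && xsum f.
Proof. destruct b; [reflexivity | apply xsum_zero]. Qed.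

Lemma xsum_andr b f : xsum (fun j => f j && b) = xsum f && b.
Proof.
  rewrite andb_comm, <- xsum_andl.
  f_equal; extensionality j; apply andb_comm.
Qed.

Lemma xsum_delta p f : xsum (fun j => (p =? j) && f j) = f p.
Proof.
  rewrite (xsum_upto_spec _ (S p)); simpl.
  - rewrite xsum_upto_zero, Nat.eqb_refl; auto.
    intros j Hj; destruct (Nat.eqb_spec p j); [lia | auto].
  - intros j Hj; destruct (Nat.eqb_spec p j); [lia | auto].
Qed.

Lemma xsum_delta_r q f : xsum (fun j => f j && (j =? q)) = f q.
Proof.
  rewrite <- (xsum_delta q f).
  f_equal; extensionality j; rewrite Nat.eqb_sym; apply andb_comm.
Qed.

Lemma xsum_upto_swap F n m :
  xsum_upto (fun j => xsum_upto (F j) m) n = xsum_upto (fun l => xsum_upto (fun j => F j l) n) m.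
Proof.
  induction n as [|n IH]; simpl.
  - symmetry; apply xsum_upto_zero; auto.
  - rewrite IH, xsum_upto_xor; reflexivity.
Qed.

Lemma xsum_swap F N : (forall j l, N <= j \/ N <= l -> F j l = false) ->
  xsum (fun j => xsum (F j)) = xsum (fun l => xsum (fun j => F j l)).
Proof.
  intros H.
  rewrite (xsum_upto_spec (fun j => xsum (F j)) N), (xsum_upto_spec (fun l => xsum (fun j => F j l)) N).
  - transitivity (xsum_upto (fun j => xsum_upto (F j) N) N).
    + f_equal; extensionality j; apply xsum_upto_spec; intros; apply H; lia.
    + rewrite xsum_upto_swap; f_equal; extensionality l.
      symmetry; apply xsum_upto_spec; intros; apply H; lia.
  - intros l Hl; rewrite (xsum_upto_spec _ 0); auto.
  - intros j Hj; rewrite (xsum_upto_spec _ 0); auto.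
Qed.

Lemma vadd_assoc u v w : vadd u (vadd v w) = vadd (vadd u v) w.
Proof. extensionality i; symmetry; apply xorb_assoc_reverse. Qed.

Lemma vadd_zero_l w : vadd vzero w = w.
Proof. extensionality i; apply xorb_false_l. Qed.

Lemma vadd_zero_r w : vadd w vzero = w.
Proof. extensionality i; apply xorb_false_r. Qed.

Lemma vadd_self w : vadd w w = vzero.
Proof. extensionality i; apply xorb_nilpotent. Qed.

Lemma fsupp_vadd v w : fsupp v -> fsupp w -> fsupp (vadd v w).
Proof.
  intros [N1 H1] [N2 H2]; exists (max N1 N2); intros.
  unfold vadd; rewrite H1, H2 by lia; auto.
Qed.

Lemma mact_idm w : mact idm w = w.
Proof. extensionality i; apply xsum_delta. Qed.

Lemma mact_vzero M : mact M vzero = vzero.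
Proof.
  extensionality i; unfold mact, vzero.
  replace (fun j => M i j && false) with (fun _ : nat => false)
    by (extensionality j; now rewrite andb_false_r).
  apply xsum_zero.
Qed.

Lemma mact_vadd M v w : fsupp v -> fsupp w -> mact M (vadd v w) = vadd (mact M v) (mact M w).
Proof.
  intros [N1 H1] [N2 H2]; extensionality i; unfold mact, vadd.
  rewrite <- xsum_xor.
  - f_equal; extensionality j; destruct (M i j), (v j), (w j); auto.
  - exists N1; intros j Hj; rewrite H1 by lia; apply andb_false_r.
  - exists N2; intros j Hj; rewrite H2 by lia; apply andb_false_r.
Qed.

Lemma fsupp_mact M w : fdev M -> fsupp w -> fsupp (mact M w).
Proof.
  intros [NM HM] [Nw Hw]; exists (max NM Nw); intros i Hi; unfold mact.
  rewrite <- (Hw i) by lia; rewrite <- xsum_delta.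
  f_equal; extensionality j; rewrite HM by lia; reflexivity.
Qed.

Lemma mact_assoc M N w : fdev M -> fdev N -> fsupp w -> mact M (mact N w) = mact (mmul M N) w.
Proof.
  intros [NM HM] [NN HN] [Nw Hw]; extensionality i; unfold mact, mmul.
  transitivity (xsum (fun j => xsum (fun l => M i j && (N j l && w l)))).
  { f_equal; extensionality j; symmetry; apply xsum_andl. }
  transitivity (xsum (fun l => xsum (fun j => (M i j && N j l) && w l))).
  2: { f_equal; extensionality l; apply xsum_andr. }
  rewrite (xsum_swap _ (max (max NM NN) (max Nw (S i)))).
  - f_equal; extensionality l; f_equal; extensionality j; apply andb_assoc.
  - intros j l [Hj | Hl].
    + rewrite HM by lia; destruct (Nat.eqb_spec i j); [lia | auto].
    + rewrite (Hw l) by lia; rewrite !andb_false_r; auto.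
Qed.

Lemma mmul_assoc M N P : fdev M -> fdev N -> fdev P -> mmul M (mmul N P) = mmul (mmul M N) P.
Proof.
  intros HM HN [NP HP]; extensionality i; extensionality k.
  change (mact M (mact N (fun j => P j k)) i = mact (mmul M N) (fun j => P j k) i).
  rewrite mact_assoc; auto.
  exists (max NP (S k)); intros j Hj.
  rewrite HP by lia; destruct (Nat.eqb_spec j k); [lia | auto].
Qed.

Lemma mmul_idm_l M : mmul idm M = M.
Proof. extensionality i; extensionality k; apply (xsum_delta i (fun j => M j k)). Qed.

Lemma mmul_idm_r M : mmul M idm = M.
Proof. extensionality i; extensionality k; apply (xsum_delta_r k (M i)). Qed.

Lemma fdev_idm : fdev idm.
Proof. exists 0; reflexivity. Qed.

Lemma inGL_idm : inGL idm.
Proof. split; [apply fdev_idm|]; exists idm; rewrite mmul_idm_l; auto using fdev_idm. Qed.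

Lemma mmul_inv_unique L M R : fdev L -> fdev M -> fdev R ->
  mmul L M = idm -> mmul M R = idm -> L = R.
Proof.
  intros HL HM HR HLM HMR.
  rewrite <- (mmul_idm_r L), <- HMR, mmul_assoc, HLM by auto; apply mmul_idm_l.
Qed.

Lemma minv_spec M : inGL M -> fdev (minv M) /\ mmul M (minv M) = idm /\ mmul (minv M) M = idm.
Proof. intros [_ H]; unfold minv; apply epsilon_spec, H. Qed.

Definition gconj (t h : Gt) : Gt := gmul (ginv t) (gmul h t).

Lemma inG_gone : inG gone.
Proof. split; [exists 0; auto | apply inGL_idm]. Qed.

Lemma inG_ofvec v : fsupp v -> inG (ofvec v).
Proof. split; [auto | apply inGL_idm]. Qed.

Lemma gmul_one_l x : gmul gone x = x.
Proof.
  destruct x as [w g]; unfold gmul; simpl.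
  rewrite vadd_zero_l, mact_idm, mmul_idm_l; reflexivity.
Qed.

Lemma gmul_one_r x : gmul x gone = x.
Proof.
  destruct x as [w g]; unfold gmul; simpl.
  rewrite mact_vzero, vadd_zero_r, mmul_idm_r; reflexivity.
Qed.

Lemma gmul_assoc x y z :
  fdev (snd x) -> fdev (snd y) -> fdev (snd z) -> fsupp (fst y) -> fsupp (fst z) ->
  gmul x (gmul y z) = gmul (gmul x y) z.
Proof.
  destruct x as [v1 g1], y as [v2 g2], z as [v3 g3]; simpl; intros H1 H2 H3 Hv2 Hv3.
  unfold gmul; simpl; f_equal.
  - rewrite mact_vadd, mact_assoc, vadd_assoc by auto using fsupp_mact; reflexivity.
  - apply mmul_assoc; auto.
Qed.

Lemma gmul_ginv_l t : inGL (snd t) -> gmul (ginv t) t = gone.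
Proof.
  destruct t as [w g]; simpl; intros Hg.
  destruct (minv_spec g Hg) as [_ [_ Hinv]].
  unfold gmul, ginv, gone; simpl; rewrite Hinv, vadd_self; reflexivity.
Qed.

Lemma gconj_commuting t h : inG t -> inG h -> gmul t h = gmul h t -> gconj t h = h.
Proof.
  intros [Ht Hgt] [Hh [Hgh _]] Hcomm; unfold gconj.
  destruct (minv_spec _ Hgt) as [Hinv _].
  rewrite <- Hcomm, gmul_assoc, gmul_ginv_l, gmul_one_l by (apply Hgt || auto); reflexivity.
Qed.

Lemma fpc_of_commuting g h : inG h -> (forall t, centralizer g t -> gmul t h = gmul h t) -> fpc g h.
Proof.
  intros Hh Hcomm; split; auto.
  exists (h :: nil); intros t Ht; left; symmetry.
  apply gconj_commuting; auto; apply Ht.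
Qed.

Lemma not_in_list_injective_tail {A : Type} (s : list A) (f : nat -> A) K :
  (forall k, K <= k -> In (f k) s) -> (forall k m, K <= k -> k < m -> f k <> f m) -> False.
Proof.
  revert f K; induction s as [|a s IH]; intros f K Hin Hinj.
  - exact (Hin K (le_n K)).
  - destruct (classic (exists k, K <= k /\ f k = a)) as [[k0 [Hk0 Hfk0]] | Hno].
    + apply (IH f (S k0)); [| intros; apply Hinj; lia].
      intros k Hk; destruct (Hin k) as [E | E]; [lia | | auto].
      exfalso; apply (Hinj k0 k); [lia | lia | congruence].
    + apply (IH f K); auto.
      intros k Hk; destruct (Hin k Hk) as [E | E]; auto.
      exfalso; apply Hno; eauto.
Qed.

Lemma fpc_no_injective_conjugates g h (t : nat -> Gt) K : fpc g h ->
  (forall k, K <= k -> centralizer g (t k)) ->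
  (forall k m, K <= k -> k < m -> gconj (t k) h <> gconj (t m) h) -> False.
Proof.
  intros [_ [s Hs]] Ht Hinj.
  apply (not_in_list_injective_tail s (fun k => gconj (t k) h) K); [| exact Hinj].
  intros k Hk; apply Hs, Ht, Hk.
Qed.

Definition dot (y w : vec) : bool := xsum (fun l => y l && w l).

Definition ev (i : nat) : vec := fun l => l =? i.

Lemma fsupp_ev i : fsupp (ev i).
Proof. exists (S i); intros j Hj; unfold ev; destruct (Nat.eqb_spec j i); [lia | auto]. Qed.

Lemma dot_ev_l k w : dot (ev k) w = w k.
Proof.
  unfold dot, ev; rewrite <- (xsum_delta k w).
  f_equal; extensionality l; rewrite Nat.eqb_sym; auto.
Qed.

Lemma dot_ev_r y k : dot y (ev k) = y k.
Proof. apply xsum_delta_r. Qed.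

Lemma dot_vadd_l y1 y2 w : fsupp y1 -> fsupp y2 -> dot (vadd y1 y2) w = xorb (dot y1 w) (dot y2 w).
Proof.
  intros [N1 H1] [N2 H2]; unfold dot, vadd; rewrite <- xsum_xor.
  - f_equal; extensionality l; destruct (y1 l), (y2 l), (w l); auto.
  - exists N1; intros; rewrite H1 by lia; auto.
  - exists N2; intros; rewrite H2 by lia; auto.
Qed.

Lemma separating_functional u v : u <> vzero -> u <> v ->
  exists y, fsupp y /\ dot y v = false /\ dot y u = true.
Proof.
  intros Hu0 Huv.
  destruct (classic (exists i, u i = true /\ v i = false)) as [[i [Hui Hvi]] | Hsub].
  { exists (ev i); split; [apply fsupp_ev | rewrite !dot_ev_l; auto]. }
  assert (exists i, u i = true) as [i Hui].
  { apply NNPP; intro C; apply Hu0; extensionality i; unfold vzero.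
    destruct (u i) eqn:E; auto; exfalso; apply C; eauto. }
  assert (exists j, u j <> v j) as [j Hj].
  { apply NNPP; intro C; apply Huv; extensionality j; apply NNPP; intro D; apply C; eauto. }
  assert (Hvi : v i = true) by (destruct (v i) eqn:E; auto; exfalso; apply Hsub; eauto).
  assert (u j = false /\ v j = true) as [Huj Hvj].
  { destruct (u j) eqn:E, (v j) eqn:F; auto; try congruence.
    exfalso; apply Hsub; eauto. }
  exists (vadd (ev i) (ev j)); split; [apply fsupp_vadd; apply fsupp_ev |].
  rewrite !dot_vadd_l, !dot_ev_l, Hui, Hvi, Huj, Hvj by apply fsupp_ev; auto.
Qed.

Definition transvection (x y : vec) : mat := fun p q => xorb (p =? q) (x p && y q).

Lemma mact_transvection x y w : fsupp y ->
  mact (transvection x y) w = fun p => xorb (w p) (x p && dot y w).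
Proof.
  intros [Ny Hy]; extensionality p; unfold mact, transvection, dot.
  rewrite <- xsum_andl, <- (xsum_delta p w) at 1; rewrite <- xsum_xor.
  - f_equal; extensionality q; destruct (p =? q), (x p), (y q), (w q); auto.
  - exists (S p); intros j Hj; destruct (Nat.eqb_spec p j); [lia | auto].
  - exists Ny; intros j Hj; rewrite Hy by lia; destruct (x p); auto.
Qed.

Lemma mmul_transvection_l x y M p q : fsupp y ->
  mmul (transvection x y) M p q = xorb (M p q) (x p && dot y (fun r => M r q)).
Proof. intros Hy; apply (f_equal (fun f => f p) (mact_transvection x y (fun r => M r q) Hy)). Qed.

Lemma mmul_transvection_r M x y p q : fsupp x ->
  mmul M (transvection x y) p q = xorb (M p q) (dot (M p) x && y q).
Proof.
  intros [Nx Hx]; unfold mmul, transvection, dot.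
  rewrite <- xsum_andr, <- (xsum_delta_r q (M p)) at 1; rewrite <- xsum_xor.
  - f_equal; extensionality r; destruct (r =? q), (M p r), (x r), (y q); auto.
  - exists (S q); intros j Hj; destruct (Nat.eqb_spec j q); [lia | apply andb_false_r].
  - exists Nx; intros j Hj; rewrite Hx by lia; destruct (M p j); auto.
Qed.

Lemma fdev_transvection x y : fsupp x -> fsupp y -> fdev (transvection x y).
Proof.
  intros [Nx Hx] [Ny Hy]; exists (max Nx Ny); intros i j [Hi | Hj]; unfold transvection.
  - rewrite Hx by lia; apply xorb_false_r.
  - rewrite (Hy j), andb_false_r by lia; apply xorb_false_r.
Qed.

Lemma transvection_involutive x y : fsupp x -> fsupp y -> dot y x = false ->
  mmul (transvection x y) (transvection x y) = idm.
Proof.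
  intros Hx Hy Hyx; extensionality p; extensionality q.
  rewrite mmul_transvection_r by auto.
  change (dot (transvection x y p) x) with (mact (transvection x y) x p).
  rewrite mact_transvection, Hyx by auto; unfold transvection, idm.
  destruct (p =? q), (x p), (y q); auto.
Qed.

Lemma inGL_transvection x y : fsupp x -> fsupp y -> dot y x = false -> inGL (transvection x y).
Proof.
  intros; split; [apply fdev_transvection; auto |].
  exists (transvection x y); split; [apply fdev_transvection; auto |].
  split; apply transvection_involutive; auto.
Qed.

Lemma minv_transvection x y : fsupp x -> fsupp y -> dot y x = false ->
  minv (transvection x y) = transvection x y.
Proof.
  intros Hx Hy Hyx.
  destruct (minv_spec _ (inGL_transvection x y Hx Hy Hyx)) as [Hinv [_ HinvT]].
  apply (mmul_inv_unique _ (transvection x y)); auto using fdev_transvection, transvection_involutive.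
Qed.

Lemma gconj_transvection x y u a : fsupp x -> fsupp y -> dot y x = false ->
  gconj (vzero, transvection x y) (u, a) =
  (mact (transvection x y) u, mmul (transvection x y) (mmul a (transvection x y))).
Proof.
  intros; unfold gconj, ginv, gmul; simpl.
  rewrite minv_transvection, !mact_vzero, vadd_zero_r, vadd_zero_l by auto; reflexivity.
Qed.

Lemma centralizer_transvection v x y : fsupp x -> fsupp y -> dot y x = false -> dot y v = false ->
  centralizer (ofvec v) (vzero, transvection x y).
Proof.
  intros Hx Hy Hyx Hyv; split.
  - split; [exists 0; auto | apply inGL_transvection; auto].
  - unfold gmul, ofvec; simpl.
    rewrite mact_transvection, Hyv, mact_vzero, mmul_idm_r, mmul_idm_l by auto.
    f_equal; extensionality i; unfold vadd, vzero; destruct (x i), (v i); auto.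
Qed.

Lemma transvection_conj_entry a j k p q :
  mmul (transvection (ev j) (ev k)) (mmul a (transvection (ev j) (ev k))) p q =
  xorb (xorb (a p q) (a p j && (q =? k))) ((p =? j) && xorb (a k q) (a k j && (q =? k))).
Proof.
  rewrite mmul_transvection_l, dot_ev_l, !mmul_transvection_r, !dot_ev_r by apply fsupp_ev.
  reflexivity.
Qed.

Lemma fpc_translation_cases v u : fpc (ofvec v) (u, idm) -> u = vzero \/ u = v.
Proof.
  intros Hfpc.
  destruct (classic (u = vzero)) as [| Hu0]; [now left |].
  destruct (classic (u = v)) as [| Huv]; [now right |].
  exfalso.
  destruct (separating_functional u v Hu0 Huv) as [y [Hy [Hyv Hyu]]].
  pose proof Hy as [Ny HNy]; pose proof Hfpc as [[[Nu HNu] _] _].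
  assert (Hyk : forall k, Ny <= k -> dot y (ev k) = false)
    by (intros; rewrite dot_ev_r; auto).
  apply (fpc_no_injective_conjugates _ _ (fun k => (vzero, transvection (ev k) y)) (max Ny Nu) Hfpc).
  - intros k Hk; apply centralizer_transvection; auto using fsupp_ev with arith.
    apply Hyk; lia.
  - intros k m Hk Hkm E.
    rewrite !gconj_transvection in E by (apply fsupp_ev || auto || (apply Hyk; lia)).
    apply (f_equal (fun c => fst c k)) in E; simpl in E.
    rewrite !mact_transvection, Hyu in E by auto; unfold ev in E.
    rewrite Nat.eqb_refl, HNu in E by lia.
    destruct (Nat.eqb_spec k m); [lia | discriminate].
Qed.

Lemma fpc_linear_part_trivial v u a : fsupp v -> fpc (ofvec v) (u, a) -> a = idm.
Proof.
  intros [Nv HNv] Hfpc.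
  apply NNPP; intro Ha.
  pose proof Hfpc as [[_ [[Na HNa] _]] _]; simpl in HNa.
  assert (exists p j, a p j <> (p =? j)) as [p [j Hpj]].
  { apply NNPP; intro C; apply Ha; extensionality p; extensionality j.
    apply NNPP; intro D; apply C; eauto. }
  assert (p < Na /\ j < Na) as [Hp Hj] by (split; apply NNPP; intro D; apply Hpj, HNa; lia).
  assert (Hkj : forall k, Na <= k -> dot (ev k) (ev j) = false)
    by (intros; rewrite dot_ev_l; apply Nat.eqb_neq; lia).
  apply (fpc_no_injective_conjugates _ _ (fun k => (vzero, transvection (ev j) (ev k))) (max Na Nv) Hfpc).
  - intros k Hk; apply centralizer_transvection; try apply fsupp_ev.
    + apply Hkj; lia.
    + rewrite dot_ev_l; apply HNv; lia.
  - intros k m Hk Hkm E.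
    rewrite !gconj_transvection in E by (apply fsupp_ev || (apply Hkj; lia)).
    (* the (p, k) entry is [a p j + delta p j] for the k-th conjugate and 0 for the m-th *)
    apply (f_equal (fun c => snd c p k)) in E; simpl in E.
    rewrite !transvection_conj_entry, Nat.eqb_refl in E.
    rewrite (HNa p k), (HNa k k), (HNa k j), (HNa m k), (HNa m j), Nat.eqb_refl in E by lia.
    destruct (Nat.eqb_spec p k); [lia |]; destruct (Nat.eqb_spec k j); [lia |].
    destruct (Nat.eqb_spec k m); [lia |]; destruct (Nat.eqb_spec m k); [lia |].
    destruct (Nat.eqb_spec m j); [lia |].
    apply Hpj; destruct (a p j), (p =? j); simpl in E; auto.
Qed.

Theorem lemma4p4 :
  forall v : vec, fsupp v -> v <> vzero ->
  forall h : Gt, fpc (ofvec v) h <-> (h = gone \/ h = ofvec v).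
Proof.
  intros v Hv _ h; split.
  - destruct h as [u a]; intros Hfpc.
    assert (a = idm) as -> by exact (fpc_linear_part_trivial v u a Hv Hfpc).
    destruct (fpc_translation_cases v u Hfpc) as [-> | ->]; [left | right]; reflexivity.
  - intros [-> | ->]; apply fpc_of_commuting.
    + apply inG_gone.
    + intros t _; rewrite gmul_one_l, gmul_one_r; reflexivity.
    + apply inG_ofvec, Hv.
    + intros t [_ Hcomm]; exact Hcomm.
Qed.
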